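(* The function $g\mapsto \|g\|_2^2$ from $\mathbb{F}_\infty$ to $\mathbb{N}$ is a morphism on an arbitrary large subset of $\mathbb{F}_\infty$: for every $N, M\in\mathbb{N}$ and every $s_1,\dots,s_M\in\mathbb{N}$ there exist elements $g_{n,k}\in\mathbb{F}_\infty$ ($1\le n\le N$, $1\le k\le M$) such that $\|g_{n,j}^{-1}g_{m,k}\|_2^2 = s_j+s_k$ for all $j,k$ and all $n\ne m$.
   Context: $\mathbb{N}=\{0,1,2,\dots\}$. $\mathbb{F}_\infty$ is the free group on countably infinitely many free generators. Every $g\ne e$ in $\mathbb{F}_\infty$ has a unique reduced form $g = a_1^{k_1}a_2^{k_2}\cdots a_n^{k_n}$ with $a_j$ free generators, $a_j\neq a_{j+1}$, and $k_j\in\mathbb{Z}\setminus\{0\}$; for $0<p\le 2$ the $\ell^p$ length is $\|g\|_p = (\sum_{j=1}^n |k_j|^p)^{1/p}$, and $\|e\|_p=0$. *)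

(* The free group F_oo on countably many generators a_0, a_1, ...
   is modelled by its reduced words: a word is a list of syllables (i, k)
   standing for a_i^k, with k <> 0 and consecutive generators distinct. *)
From mathcomp Require Import all_boot all_order all_algebra.
Set Implicit Arguments. Unset Strict Implicit. Unset Printing Implicit Defensive.
Import Order.TTheory GRing.Theory Num.Theory.

Definition syllable := (nat * int)%type.

Fixpoint adj_distinct (w : seq syllable) : bool :=
  match w with
  | a :: ((b :: _) as w') => (a.1 != b.1) && adj_distinct w'
  | _ => true
  end.

Definition reduced (w : seq syllable) : bool :=
  all (fun a => a.2 != 0%R) w && adj_distinct w.

Definition Finf := {w : seq syllable | reduced w}.

Definition cons_red (a : syllable) (w : seq syllable) : seq syllable :=
  if a.2 == 0%R then w else
  match w with
  | b :: w' => if a.1 == b.1 then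
                 (if (a.2 + b.2 == 0)%R then w' else (a.1, (a.2 + b.2)%R) :: w')
               else a :: w
  | [::] => [:: a]
  end.

Definition wmul (u v : seq syllable) : seq syllable := foldr cons_red v u.
Definition winv (u : seq syllable) : seq syllable :=
  rev (map (fun a => (a.1, (- a.2)%R)) u).

Definition ldiv (g h : Finf) : seq syllable := wmul (winv (val g)) (val h).

Definition l2sq (w : seq syllable) : nat := \sum_(a <- w) (absz a.2) ^ 2.

From mathcomp Require Import all_boot all_order all_algebra.
From mathcomp Require Import zify.
Set Implicit Arguments. Unset Strict Implicit. Unset Printing Implicit Defensive.
Import Order.TTheory GRing.Theory Num.Theory.

(* Take g_{n,k} = a_{n} a_{N+n} ... a_{(s_k-1)N+n}: a product of s_k distinct
   generators, those used for different n lying in different residue classes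
   mod N.  For n <> m the words g_{n,j}^-1 and g_{m,k} involve disjoint sets of
   generators, so their product is just the concatenation, already reduced,
   and all its exponents are +-1; its squared l^2 length is s_j + s_k. *)

Lemma uniq_adj_distinct (w : seq syllable) : uniq (map fst w) -> adj_distinct w.
Proof.
elim: w => [|a [|b w] IH] //= /andP [a_notin uniq_bw].
change ((a.1 != b.1) && adj_distinct (b :: w)); rewrite IH // andbT. apply: contra a_notin => /eqP ->.
by rewrite inE eqxx.
Qed.

Lemma wmul_uniq_cat (u v : seq syllable) :
  all (fun a => a.2 != 0%R) u -> uniq (map fst (u ++ v)) -> wmul u v = u ++ v.
Proof.
elim: u => [|a u IH] //= /andP [a_nz u_nz] /andP [a_notin uniq_uv].
rewrite IH // /cons_red (negbTE a_nz).
case def_uv: (u ++ v) => [|b w] //.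
suff /negbTE -> : a.1 != b.1 by [].
by apply: contra a_notin => /eqP ->; rewrite def_uv inE eqxx.
Qed.

Lemma map_fst_winv (u : seq syllable) : map fst (winv u) = rev (map fst u).
Proof. by rewrite /winv map_rev -map_comp. Qed.

Lemma all_nonzero_winv (u : seq syllable) :
  all (fun a => a.2 != 0%R) (winv u) = all (fun a => a.2 != 0%R) u.
Proof. by rewrite /winv all_rev all_map; apply: eq_all => a /=; rewrite oppr_eq0. Qed.

Lemma l2sq_cat (u v : seq syllable) : l2sq (u ++ v) = l2sq u + l2sq v.
Proof. by rewrite /l2sq big_cat. Qed.

Lemma l2sq_winv (u : seq syllable) : l2sq (winv u) = l2sq u.
Proof. by rewrite /l2sq /winv big_rev big_map; apply: eq_bigr => a _; rewrite abszN. Qed.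

Definition letters (I : seq nat) : seq syllable := [seq (i, 1%R) | i <- I].

Lemma map_fst_letters (I : seq nat) : map fst (letters I) = I.
Proof. by rewrite /letters -map_comp map_id. Qed.

Lemma all_nonzero_letters (I : seq nat) : all (fun a => a.2 != 0%R) (letters I).
Proof. by rewrite all_map; apply/allP. Qed.

Lemma reduced_letters (I : seq nat) : uniq I -> reduced (letters I).
Proof.
by move=> uniq_I; rewrite /reduced all_nonzero_letters uniq_adj_distinct // map_fst_letters.
Qed.

Lemma l2sq_letters (I : seq nat) : l2sq (letters I) = size I.
Proof. by rewrite /l2sq big_map (eq_bigr (fun _ => 1)) // sum1_size. Qed.

Lemma wmul_winv_letters (I J : seq nat) :
  uniq (I ++ J) -> wmul (winv (letters I)) (letters J) = winv (letters I) ++ letters J.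
Proof.
move=> uniq_IJ; apply: wmul_uniq_cat; first by rewrite all_nonzero_winv all_nonzero_letters.
by rewrite map_cat map_fst_winv !map_fst_letters cat_uniq rev_uniq (eq_has (mem_rev I)) -cat_uniq.
Qed.

Lemma l2sq_wmul_winv_letters (I J : seq nat) :
  uniq (I ++ J) -> l2sq (wmul (winv (letters I)) (letters J)) = size I + size J.
Proof.
by move=> uniq_IJ; rewrite wmul_winv_letters // l2sq_cat l2sq_winv !l2sq_letters.
Qed.

Definition progression (N n s : nat) : seq nat := [seq i * N + n | i <- iota 0 s].

Lemma size_progression (N n s : nat) : size (progression N n s) = s.
Proof. by rewrite size_map size_iota. Qed.

Lemma progression_uniq (N n s : nat) : n < N -> uniq (progression N n s).
Proof.
move=> n_lt_N; rewrite map_inj_uniq ?iota_uniq // => i j /eqP.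
by rewrite eqn_add2r eqn_mul2r => /orP [] /eqP; lia.
Qed.

Lemma modn_progression (N n s x : nat) :
  n < N -> x \in progression N n s -> x %% N = n.
Proof. by move=> n_lt_N /mapP [i _ ->]; rewrite modnMDl modn_small. Qed.

Lemma progression_cat_uniq (N n m s t : nat) : n < N -> m < N -> n != m ->
  uniq (progression N n s ++ progression N m t).
Proof.
move=> n_lt_N m_lt_N n_neq_m.
rewrite cat_uniq !progression_uniq //= andbT; apply/hasP => -[x x_in_m x_in_n].
by move: n_neq_m; rewrite -(modn_progression n_lt_N x_in_n) (modn_progression m_lt_N x_in_m) eqxx.
Qed.

Theorem proposition4p1 (N M : nat) (s : 'I_M -> nat) :
  exists g : 'I_N -> 'I_M -> Finf,
    forall (n m : 'I_N) (j k : 'I_M), n != m ->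
      l2sq (ldiv (g n j) (g m k)) = (s j + s k)%N.
Proof.
pose g n k : Finf :=
  exist _ (letters (progression N (val n) (s k))) (reduced_letters (progression_uniq _ (ltn_ord n))).
exists g => n m j k n_neq_m.
by rewrite /ldiv /= l2sq_wmul_winv_letters ?progression_cat_uniq // !size_progression.
Qed.
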